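(* $\mathsf{ELCR}$ is decidable: there is an algorithm which, given a formula $\varphi\in\mathcal{L}$, decides whether $\varphi$ is satisfiable in some situation of some $k$-sight model (equivalently, whether $\varphi$ is valid on all $k$-sight models).
   Context: Fix a natural number $k$ and a vocabulary: $Pred$ (predicate symbols with arities, containing binary $R$), a nonempty finite set $Cons$ of constants, $Var=\{x,y\}$; terms $\mathsf{Term}=Cons\cup Var$. Syntax: $\mathcal{L}_{\mathsf{B}}$: $\alpha::=P(t_1,\dots,t_m)\mid t_1\equiv t_2\mid\neg\alpha\mid(\alpha\land\alpha)$; $\mathcal{L}_{\mathsf{BD}}$: $\psi::=\alpha\mid\neg\psi\mid(\psi\land\psi)\mid[z]\psi$; $\mathcal{L}$: $\varphi::=\psi\mid K_zt\mid\neg\varphi\mid(\varphi\land\varphi)\mid K_z\psi\mid[z]\varphi$ ($z\in Var$, $t\in\mathsf{Term}$). Models: $M=(\mathbf{D},\mathbf{I},\Sigma,\sim)$ with $\mathbf{D}$ nonempty finite; $\mathbf{I}(P)\subseteq\mathbf{D}^m$ for $m$-ary $P$, $\mathbf{R}:=\mathbf{I}(R)$ serial; $\mathbf{I}(c)\in\mathbf{D}$ for $c\in Cons$, every element of $\mathbf{D}$ named by some constant; $\Sigma\subseteq\mathbf{D}^{Var}$ nonempty set of situations; $\sim_x,\sim_y$ equivalence relations on $\Sigma$. $\mathbb{D}^0(s)=\{s\}$, $\mathbb{D}^{m+1}(s)=\mathbb{D}^m(s)\cup\{t:\exists u\in\mathbb{D}^m(s),(u,t)\in\mathbf{R}\text{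 or }(t,u)\in\mathbf{R}\}$. $M$ is $k$-sight if $\sigma\sim_z\sigma'$ implies $\sigma(z')=\sigma'(z')$ for every $z'\in Var$ with $\sigma(z')\in\mathbb{D}^k(\sigma(z))$. Semantics: $t^{(\mathbf{I},\sigma)}$ is $\mathbf{I}(t)$ or $\sigma(t)$; $P(t_1,\dots,t_m)$ true at $\sigma$ iff the tuple of values is in $\mathbf{I}(P)$; $t_1\equiv t_2$ iff equal values; Boolean standard; $K_zt$ true at $\sigma$ iff $t$ has the same value at all $\sigma'\in\Sigma$ with $\sigma'\sim_z\sigma$; $K_z\varphi$ true at $\sigma$ iff $\varphi$ true at all $\sigma'\in\Sigma$ with $\sigma'\sim_z\sigma$. For $[z]$: $\mathsf{R}^z\sigma\sigma'$ iff $(\sigma(z),\sigma'(z))\in\mathbf{R}$ and $\sigma(z')=\sigma'(z')$ for the other variable $z'$; $\mathsf{R}^z(\Gamma)=\{\sigma':\exists\sigma\in\Gamma,\mathsf{R}^z\sigma\sigma'\}$; $\Sigma|\sigma=\{\sigma'\in\Sigma:\sigma\sim_w\sigma'\text{ for some }w\in Var\}$; $M,\sigma_1\models[z]\varphi$ iff for all $\sigma_2\in\mathsf{R}^z(\{\sigma_1\})$, $(\mathbf{D},\mathbf{I},\Sigma',\sim'),\sigma_2\models\varphi$, where $\Sigma'=\{\sigma_2\}$ if $\sigma_2(x)\in\mathbb{D}^k(\sigma_2(y))$, and otherwise $\Sigma'=\{\sigma'\in\mathsf{R}^z(\Sigma|\sigma_1):\sigma'(x)\notin\mathbb{D}^k(\sigma'(y))\}$;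 and $\sigma'_1\sim'_w\sigma'_2$ iff $\sigma'_1(w)=\sigma'_2(w)$, for $w\in Var$. *)

From mathcomp Require Import all_boot.
Set Implicit Arguments. Unset Strict Implicit. Unset Printing Implicit Defensive.

Inductive Var := vx | vy.
Definition Var_eqb (a b : Var) : bool :=
  match a, b with vx, vx | vy, vy => true | _, _ => false end.
Definition other (z : Var) : Var := match z with vx => vy | vy => vx end.
Definition var_code (z : Var) : nat := match z with vx => 0 | vy => 1 end.

(* Syntax.  One inductive type of formulas; the sublanguage L is carved out  *)
(* by [inL] (the K-operators may only be applied to K-free formulas, i.e. to *)
(* formulas of L_BD).                                                        *)
Section Syntax.
Variables (Pred Cons : Type).

Inductive term := TC of Cons | TV of Var.

Inductive form :=
| FAtom of Pred & seq term
| FEq of term & term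
| FNeg of form
| FAnd of form & form
| FBox of Var & form
| FKt of Var & term
| FK of Var & form.

Fixpoint Kfree (f : form) : bool :=
  match f with
  | FAtom _ _ | FEq _ _ => true
  | FNeg g => Kfree g
  | FAnd g h => Kfree g && Kfree h
  | FBox _ g => Kfree g
  | FKt _ _ | FK _ _ => false
  end.

Fixpoint inL (f : form) : bool :=
  match f with
  | FAtom _ _ | FEq _ _ | FKt _ _ => true
  | FNeg g => inL g
  | FAnd g h => inL g && inL h
  | FBox _ g => inL g
  | FK _ g => Kfree g
  end.

Fixpoint wf (arity : Pred -> nat) (f : form) : bool :=
  match f with
  | FAtom P ts => size ts == arity P
  | FEq _ _ | FKt _ _ => true
  | FNeg g => wf arity g
  | FAnd g h => wf arity g && wf arity h
  | FBox _ g => wf arity g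
  | FK _ g => wf arity g
  end.
End Syntax.

Section Semantics.
Variables (k : nat) (Pred : Type) (arity : Pred -> nat) (R : Pred) (Cons : finType).

(* A situation sigma : Var -> D is represented by the pair (sigma x, sigma y). *)
Definition get (D : Type) (s : D * D) (z : Var) : D :=
  match z with vx => s.1 | vy => s.2 end.

Unset Implicit Arguments.
Record model := Model {
  mD : finType;
  mI : Pred -> pred (seq mD);
  mIc : Cons -> mD;
  mSigma : {set mD * mD};
  msim : Var -> rel (mD * mD)
}.
Set Implicit Arguments.

Section OneModel.
Variables (D : finType) (I : Pred -> pred (seq D)) (Ic : Cons -> D).

Definition Rrel (a b : D) : bool := I R [:: a; b].

Fixpoint Dk (m : nat) (a : D) : {set D} :=
  match m with
  | 0 => [set a]
  | m'.+1 => Dk m' a :|: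
      [set t | [exists u in Dk m' a, Rrel u t || Rrel t u]]
  end.

Definition tval (s : D * D) (t : term Cons) : D :=
  match t with TC c => Ic c | TV z => get s z end.

Definition Rz (z : Var) (s s' : D * D) : bool :=
  Rrel (get s z) (get s' z) && (get s (other z) == get s' (other z)).

Definition Rzimg (z : Var) (G : {set D * D}) : {set D * D} :=
  [set s' | [exists s in G, Rz z s s']].

Definition restr (Sig : {set D * D}) (sim : Var -> rel (D * D)) (s : D * D)
  : {set D * D} :=
  [set s' in Sig | [exists w : bool, sim (if w then vx else vy) s s']].

Definition near (s : D * D) : bool := get s vx \in Dk k (get s vy).

Definition newSigma (Sig : {set D * D}) (sim : Var -> rel (D * D))
  (z : Var) (s1 s2 : D * D) : {set D * D} :=
  if near s2 then [set s2]
  else [set s' in Rzimg z (restr Sig sim s1) | ~~ near s'].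

Definition newsim : Var -> rel (D * D) := fun w a b => get a w == get b w.

Fixpoint sat (Sig : {set D * D}) (sim : Var -> rel (D * D))
  (f : form Pred Cons) (s : D * D) {struct f} : Prop :=
  match f with
  | FAtom P ts => I P [seq tval s t | t <- ts]
  | FEq t1 t2 => tval s t1 = tval s t2
  | FNeg g => ~ sat Sig sim g s
  | FAnd g h => sat Sig sim g s /\ sat Sig sim h s
  | FKt z t => forall s1 s2, s1 \in Sig -> s2 \in Sig ->
        sim z s s1 -> sim z s s2 -> tval s1 t = tval s2 t
  | FK z g => forall s', s' \in Sig -> sim z s s' -> sat Sig sim g s'
  | FBox z g => forall s2, Rz z s s2 ->
        sat (newSigma Sig sim z s s2) newsim g s2
  end.
End OneModel.

Definition is_model (M : model) : Prop :=
  let D := mD M in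
  let I := mI M in
  let Sig := mSigma M in
  let sim := msim M in
  (exists d : D, True) /\
  (forall P (l : seq D), I P l -> size l = arity P) /\
  (forall a : D, exists b : D, I R [:: a; b]) /\
  (forall d : D, exists c, mIc M c = d) /\
  (exists s, s \in Sig) /\
  (forall z : Var,
        (forall s, s \in Sig -> sim z s s) /\
        (forall s t, s \in Sig -> t \in Sig -> sim z s t -> sim z t s) /\
        (forall s t u, s \in Sig -> t \in Sig -> u \in Sig ->
            sim z s t -> sim z t u -> sim z s u)).

Definition ksight (M : model) : Prop :=
  forall (z z' : Var) (s s' : mD M * mD M),
    s \in mSigma M -> s' \in mSigma M -> msim M z s s' ->
    get s z' \in Dk (mI M) k (get s z) ->
    get s z' = get s' z'.

Definition satisfiable (f : form Pred Cons) : Prop :=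
  exists M : model, is_model M /\ ksight M /\
    exists s, s \in mSigma M /\ sat (mI M) (mIc M) (mSigma M) (msim M) f s.
End Semantics.

(* A model of computation: (untyped) mu-recursive functions on nat.          *)
Inductive mu :=
| MZero
| MSucc
| MProj of nat
| MComp of mu & seq mu
| MRec of mu & mu
| MMin of mu.

Inductive eval : mu -> seq nat -> nat -> Prop :=
| eZero v : eval MZero v 0
| eSucc x v : eval MSucc (x :: v) x.+1
| eProj i v : i < size v -> eval (MProj i) v (nth 0 v i)
| eComp f gs v ws y : evals gs v ws -> eval f ws y -> eval (MComp f gs) v y
| eRec0 f g v y : eval f v y -> eval (MRec f g) (0 :: v) y
| eRecS f g n v r y : eval (MRec f g) (n :: v) r -> eval g (n :: r :: v) y ->
    eval (MRec f g) (n.+1 :: v) y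
| eMin f v n : eval f (n :: v) 0 ->
    (forall m, m < n -> exists r, eval f (m :: v) r.+1) ->
    eval (MMin f) v n
with evals : seq mu -> seq nat -> seq nat -> Prop :=
| esNil v : evals [::] v [::]
| esCons g gs v w ws : eval g v w -> evals gs v ws -> evals (g :: gs) v (w :: ws).

Definition cpair (a b : nat) : nat := (a + b) * (a + b).+1 %/ 2 + b.

Section Encoding.
Variables (Pred : countType) (Cons : finType).

Definition enct (t : term Cons) : nat :=
  match t with
  | TC c => cpair 0 (enum_rank c)
  | TV z => cpair 1 (var_code z)
  end.

Fixpoint encts (ts : seq (term Cons)) : nat :=
  match ts with
  | [::] => 0
  | t :: ts' => (cpair (enct t) (encts ts')).+1
  end.

Fixpoint encf (f : form Pred Cons) : nat :=
  match f with
  | FAtom P ts => cpair 0 (cpair (pickle P) (encts ts))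
  | FEq t1 t2 => cpair 1 (cpair (enct t1) (enct t2))
  | FNeg g => cpair 2 (encf g)
  | FAnd g h => cpair 3 (cpair (encf g) (encf h))
  | FBox z g => cpair 4 (cpair (var_code z) (encf g))
  | FKt z t => cpair 5 (cpair (var_code z) (enct t))
  | FK z g => cpair 6 (cpair (var_code z) (encf g))
  end.
End Encoding.

(* Every element of a model is named by one of the finitely many constants,
   so a model has at most [#|Cons|] elements and is described by finitely
   many bounded numbers: its size and tables for the constants, for [R] and
   the other predicates occurring in [phi], for [~x] and [~y], and for its
   set of situations.  In a described model the truth value of [phi] in
   every context (a set of situations, the indistinguishability relations
   and a situation) is computed by course-of-values recursion on the code of
   [phi]; this works because a [[z]] step leads to a context of the same
   finite kind: its situations are pairs of elements and its relations are
   agreement on [x] and on [y].  Satisfiability is thus decided by a bounded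
   search over descriptions, which is primitive recursive.  To obtain a
   mu-recursive program, the search is written once over an abstract
   signature of arithmetic: read in [nat] it is reasoned about, read as
   syntax it is compiled to mu-recursive functions, and the two readings
   agree by computation. *)

From Pilot Require Import Defs.
From mathcomp Require Import all_boot.
From Stdlib Require Import FunctionalExtensionality Lia ClassicalEpsilon.
From mathcomp Require Import zify.
Set Implicit Arguments. Unset Strict Implicit. Unset Printing Implicit Defensive.

(** * Primitive recursive expressions *)

Fixpoint primrec (n b : nat) (s : nat -> nat -> nat) : nat :=
  match n with 0 => b | i.+1 => s i (primrec i b s) end.

Lemma primrec_iter n b (f : nat -> nat) : primrec n b (fun _ a => f a) = iter n f b.
Proof. by elim: n => //= n ->. Qed.

(* Expressions over an environment [v : seq nat] of de Bruijn indexed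
   variables; [PRec c b s] binds the counter and the accumulator in [s]. *)
Inductive pexp :=
| PVar of nat
| PZero
| PSucc of pexp
| PBehead of pexp
| PDel1 of pexp
| PRec of pexp & pexp & pexp.

Fixpoint peval (e : pexp) (v : seq nat) : nat :=
  match e with
  | PVar i => nth 0 v i
  | PZero => 0
  | PSucc e => (peval e v).+1
  | PBehead e => peval e (behead v)
  | PDel1 e => peval e (nth 0 v 0 :: drop 2 v)
  | PRec c b s => primrec (peval c v) (peval b v) (fun i a => peval s (i :: a :: v))
  end.

Definition mu_projs (m k : nat) : seq mu := [seq MProj i | i <- iota m k].

Fixpoint pcompile (n : nat) (e : pexp) : mu :=
  match e with
  | PVar i => if i < n then MProj i else MZero
  | PZero => MZero
  | PSucc e => MComp MSucc [:: pcompile n e]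
  | PBehead e => MComp (pcompile n.-1 e) (mu_projs 1 n.-1)
  | PDel1 e => MComp (pcompile (n - 2).+1 e)
                 ((if 0 < n then MProj 0 else MZero) :: mu_projs 2 (n - 2))
  | PRec c b s => MComp (MRec (pcompile n b) (pcompile n.+2 s)) (pcompile n c :: mu_projs 0 n)
  end.

Lemma evals_mu_projs v m k : m + k <= size v ->
  evals (mu_projs m k) v [seq nth 0 v i | i <- iota m k].
Proof.
elim: k m => [|k IH] m H /=; first by constructor.
constructor; first by constructor; apply: leq_trans H; rewrite addnS ltnS leq_addr.
by apply: IH; rewrite addSn -addnS.
Qed.

Lemma evals_mu_projs_drop v m : m <= size v -> evals (mu_projs m (size v - m)) v (drop m v).
Proof.
move=> H; have := @evals_mu_projs v m (size v - m); rewrite subnKC // => /(_ (leqnn _)).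
by rewrite map_nth_iota // take_oversize // size_drop.
Qed.

Lemma eval_pcompile e n v : size v = n -> eval (pcompile n e) v (peval e v).
Proof.
elim: e n v => [i||e IH|e IH|e IH|c IHc b IHb s IHs] n v Hv /=.
- case: ifP => Hi; first by constructor; rewrite Hv.
  by rewrite nth_default; [constructor | rewrite Hv leqNgt Hi].
- constructor.
- by econstructor; [constructor; [apply: IH Hv | constructor] | constructor].
- econstructor; last by apply: (IH _ (behead v)); rewrite size_behead Hv.
  case: v Hv => [|x v] <- /=; first by constructor.
  by have := @evals_mu_projs_drop (x :: v) 1; rewrite /= subn1 drop0; apply.
- econstructor; last by apply: IH; rewrite /= size_drop Hv.
  constructor.
  + case: v Hv => [|x v] <- /=; constructor => //.
  + case: v Hv => [|x [|y v]] <-; try constructor.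
    by have := @evals_mu_projs_drop [:: x, y & v] 2; apply.
- econstructor.
  + constructor; first exact: IHc Hv.
    by have := @evals_mu_projs_drop v 0; rewrite drop0 subn0 Hv; apply.
  + elim: (peval c v) => [|x IHx] /=; first by constructor; apply: IHb.
    by econstructor; [apply: IHx | apply: IHs; rewrite /= Hv].
Qed.

(** * Cantor pairing, bounded search and tables *)

Definition tri (w : nat) := (w * w.+1) %/ 2.

Lemma cpairE a b : cpair a b = tri (a + b) + b.
Proof. by []. Qed.

Lemma triS w : tri w.+1 = tri w + w.+1.
Proof.
rewrite /tri (_ : w.+1 * w.+2 = w.+1 * 2 + w * w.+1); last by nia.
by rewrite divnMDl // addnC.
Qed.

Lemma leq_tri : {homo tri : m n / m <= n}.
Proof.
move=> m n /subnKC <-; elim: (n - m) => [|i IH]; first by rewrite addn0.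
by rewrite addnS triS; apply: leq_trans IH _; apply: leq_addr.
Qed.

Lemma leq_self_tri w : w <= tri w.
Proof. by case: w => // w; rewrite triS leq_addl. Qed.

Lemma cpair_inj a b a' b' : cpair a b = cpair a' b' -> a = a' /\ b = b'.
Proof.
rewrite !cpairE => E.
suff Hs : a + b = a' + b' by move: E; rewrite Hs; lia.
have tri_gap w w' : w < w' -> tri w + w < tri w'.
  by move=> lt_ww'; have := leq_tri lt_ww'; rewrite triS; lia.
by case: (ltngtP (a + b) (a' + b')) => // /tri_gap; lia.
Qed.

Lemma leq_cpairl a b : a <= cpair a b.
Proof.
rewrite cpairE (leq_trans _ (leq_addr _ _)) // (leq_trans (leq_addr b a)) //.
exact: leq_self_tri.
Qed.

Lemma leq_cpairr a b : b <= cpair a b.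
Proof. by rewrite cpairE leq_addl. Qed.

Lemma ltn_cpair_succ a b : b < cpair a.+1 b.
Proof. by rewrite cpairE addSn triS; lia. Qed.

Lemma leq_cpair a b a' b' : a <= a' -> b <= b' -> cpair a b <= cpair a' b'.
Proof. by move=> Ha Hb; rewrite !cpairE leq_add // leq_tri // leq_add. Qed.

Lemma ltn_cpair2l a b b' : b < b' -> cpair a b < cpair a b'.
Proof.
by move=> H; rewrite !cpairE (leq_trans (_ : _ < tri (a + b) + b')) ?ltn_add2l // leq_add2r
  leq_tri // leq_add2l ltnW.
Qed.

Lemma nat_of_bool_neq0 (b : bool) : (nat_of_bool b != 0) = b.
Proof. by case: b. Qed.

Lemma leq_nat_of_bool1 (b : bool) : nat_of_bool b <= 1.
Proof. by case: b. Qed.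

(* Boolean operations on [nat] read [0] as false and anything else as true. *)
Fixpoint bexn (n : nat) (P : nat -> nat) : bool :=
  match n with 0 => false | i.+1 => bexn i P || (P i != 0) end.

Lemma bexnP n P : reflect (exists2 i, i < n & P i != 0) (bexn n P).
Proof.
elim: n => [|n IH] /=; first by constructor; case.
apply: (iffP orP) => [[/IH [i Hi H] | H] | [i]]; first by exists i => //; apply: ltnW.
- by exists n.
rewrite ltnS leq_eqVlt => /orP [/eqP -> | Hi H]; first by right.
by left; apply/IH; exists i.
Qed.

Fixpoint bminn (n : nat) (P : nat -> nat) : nat :=
  match n with
  | 0 => 0
  | i.+1 => let a := bminn i P in if a < i then a else if P i != 0 then i else i.+1
  end.

Lemma bminn_eq P j N : P j != 0 -> (forall i, i < j -> P i = 0) -> j < N -> bminn N P = j.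
Proof.
move=> Hj Hlt.
suff -> : bminn N P = if j < N then j else N by move=> ->.
elim: N => [|M IH] //=; rewrite IH.
case: (ltngtP j M) => [H|H|<-].
- by rewrite H (ltn_trans H).
- by rewrite ltnn (Hlt _ H) /= ltnS leqNgt H.
- by rewrite ltnn Hj ltnSn.
Qed.

Definition unpair1 (p : nat) : nat :=
  bminn p.+1 (fun a => bexn p.+1 (fun b => cpair a b == p)).
Definition unpair2 (p : nat) : nat :=
  bminn p.+1 (fun b => bexn p.+1 (fun a => cpair a b == p)).

Lemma unpair1_cpair a b : unpair1 (cpair a b) = a.
Proof.
apply: bminn_eq; last by rewrite ltnS leq_cpairl.
- by rewrite nat_of_bool_neq0; apply/bexnP; exists b; rewrite ?ltnS ?leq_cpairr ?eqxx.
move=> i Hi; apply/eqP; rewrite eqb0; apply/bexnP => [[b' _]].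
by rewrite nat_of_bool_neq0 => /eqP /cpair_inj [E _]; move: Hi; rewrite E ltnn.
Qed.

Lemma unpair2_cpair a b : unpair2 (cpair a b) = b.
Proof.
apply: bminn_eq; last by rewrite ltnS leq_cpairr.
- by rewrite nat_of_bool_neq0; apply/bexnP; exists a; rewrite ?ltnS ?leq_cpairl ?eqxx.
move=> i Hi; apply/eqP; rewrite eqb0; apply/bexnP => [[a' _]].
by rewrite nat_of_bool_neq0 => /eqP /cpair_inj [_ E]; move: Hi; rewrite E ltnn.
Qed.

(* Sequences are coded as [0] (empty) and [(cpair x s).+1] (cons); the table
   [tabn N f] is the sequence [f N.-1; ...; f 0]. *)
Definition tabn (N : nat) (f : nat -> nat) : nat :=
  primrec N 0 (fun i a => (cpair (f i) a).+1).
Definition lookupn (T N i : nat) : nat :=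
  unpair1 (primrec (N - i.+1) T (fun _ a => unpair2 a.-1)).-1.

(* A recursion that conses each value onto its accumulator keeps the table of
   all earlier values (course-of-values recursion). *)
Lemma lookupn_hist (F : nat -> nat -> nat) c c' : c' < c ->
  lookupn (primrec c 0 (fun i a => (cpair (F i a) a).+1)) c c' =
  F c' (primrec c' 0 (fun i a => (cpair (F i a) a).+1)).
Proof.
set H := fun j => primrec j 0 (fun i a => (cpair (F i a) a).+1).
have tlH j : unpair2 (H j.+1).-1 = H j by rewrite /H /= unpair2_cpair.
have drop m : iter m (fun a => unpair2 a.-1) (H (c'.+1 + m)) = H c'.+1.
  by elim: m => [|m IH]; rewrite ?addn0 // iterSr addnS tlH IH.
move=> Hc; rewrite /lookupn primrec_iter -(subnKC Hc) subSS addKn.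
by rewrite drop /H /= unpair1_cpair.
Qed.

Lemma lookupn_tabn N f i : i < N -> lookupn (tabn N f) N i = f i.
Proof. exact: (lookupn_hist (fun i _ => f i)). Qed.

Definition pconst m := iter m PSucc PZero.
Definition ppred x := PRec x PZero (PVar 0).
Definition pnz x := PRec x PZero (PSucc PZero).
Definition pz x := PRec x (PSucc PZero) PZero.
Definition padd a b := PRec a b (PSucc (PVar 1)).
Definition psub a b := PRec b a (ppred (PVar 1)).
Definition pmul a b := PRec a PZero (padd (PVar 1) (PBehead (PBehead b))).
Definition peq a b := pz (padd (psub a b) (psub b a)).
Definition plt a b := pnz (psub b a).
Definition pand a b := PRec a PZero (pnz (PBehead (PBehead b))).
Definition por a b := PRec a (pnz b) (PSucc PZero).
Definition pite c t e := PRec c e (PBehead (PBehead t)).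
Definition podd x := PRec x PZero (pz (PVar 1)).
Definition phalf x := PRec x PZero (padd (PVar 1) (podd (PVar 0))).
Definition ppair a b := padd (phalf (pmul (padd a b) (PSucc (padd a b)))) b.
Definition pbex b f := PRec b PZero (por (PVar 1) (PDel1 f)).
Definition pbmin b f := PRec b PZero
  (pite (plt (PVar 1) (PVar 0)) (PVar 1) (pite (PDel1 f) (PVar 0) (PSucc (PVar 0)))).
Definition punpair1 x := pbmin (PSucc x)
  (pbex (PSucc (PBehead x)) (peq (ppair (PVar 1) (PVar 0)) (PBehead (PBehead x)))).
Definition punpair2 x := pbmin (PSucc x)
  (pbex (PSucc (PBehead x)) (peq (ppair (PVar 0) (PVar 1)) (PBehead (PBehead x)))).
Definition ptab N f := PRec N PZero (PSucc (ppair (PDel1 f) (PVar 1))).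
Definition plookup T N i :=
  punpair1 (ppred (PRec (psub N (PSucc i)) T (punpair2 (ppred (PVar 1))))).
Definition plet a f := PRec (PSucc PZero) a (PBehead f).

(* Each combinator is made opaque once its meaning is established, so that
   later computations do not unfold it. *)
Lemma peval_const m v : peval (pconst m) v = m.
Proof. by elim: m => //= m ->. Qed.
Opaque pconst.
Lemma peval_pred x v : peval (ppred x) v = (peval x v).-1.
Proof. by rewrite /=; case: (peval x v). Qed.
Opaque ppred.
Lemma peval_nz x v : peval (pnz x) v = (peval x v != 0).
Proof. by rewrite /=; case: (peval x v). Qed.
Opaque pnz.
Lemma peval_z x v : peval (pz x) v = (peval x v == 0).
Proof. by rewrite /=; case: (peval x v). Qed.
Opaque pz.
Lemma peval_add a b v : peval (padd a b) v = peval a v + peval b v.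
Proof. by rewrite /=; elim: (peval a v) => //= m ->. Qed.
Opaque padd.
Lemma peval_sub a b v : peval (psub a b) v = peval a v - peval b v.
Proof.
rewrite /=; elim: (peval b v) => [|m IH] /=; first by rewrite subn0.
by rewrite peval_pred IH subnS.
Qed.
Opaque psub.
Lemma peval_mul a b v : peval (pmul a b) v = peval a v * peval b v.
Proof. by rewrite /=; elim: (peval a v) => //= m ->; rewrite peval_add /=; lia. Qed.
Opaque pmul.
Lemma peval_eq a b v : peval (peq a b) v = (peval a v == peval b v).
Proof. by rewrite peval_z peval_add !peval_sub; congr nat_of_bool; apply/eqP/eqP; lia. Qed.
Opaque peq.
Lemma peval_lt a b v : peval (plt a b) v = (peval a v < peval b v).
Proof. by rewrite peval_nz peval_sub subn_eq0 ltnNge. Qed.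
Opaque plt.
Lemma peval_and a b v : peval (pand a b) v = (peval a v != 0) && (peval b v != 0).
Proof. by rewrite /=; case: (peval a v) => //= m; rewrite peval_nz. Qed.
Opaque pand.
Lemma peval_or a b v : peval (por a b) v = (peval a v != 0) || (peval b v != 0).
Proof. by rewrite /= peval_nz; case: (peval a v). Qed.
Opaque por.
Lemma peval_ite c t e v :
  peval (pite c t e) v = if peval c v != 0 then peval t v else peval e v.
Proof. by rewrite /=; case: (peval c v). Qed.
Opaque pite.
Lemma peval_odd x v : peval (podd x) v = odd (peval x v).
Proof. by rewrite /=; elim: (peval x v) => //= m ->; rewrite peval_z; case: (odd m). Qed.
Opaque podd.
Lemma peval_half x v : peval (phalf x) v = (peval x v)./2.
Proof.
rewrite /=; elim: (peval x v) => //= m ->.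
by rewrite peval_add /= peval_odd /= uphalf_half addnC.
Qed.
Opaque phalf.
Lemma peval_pair a b v : peval (ppair a b) v = cpair (peval a v) (peval b v).
Proof. by rewrite peval_add peval_half peval_mul /= peval_add /cpair divn2. Qed.
Opaque ppair.
Lemma peval_bex b f v : peval (pbex b f) v = bexn (peval b v) (fun i => peval f (i :: v)).
Proof.
by rewrite /=; elim: (peval b v) => //= m IH; rewrite peval_or /= drop0 IH nat_of_bool_neq0.
Qed.
Opaque pbex.
Lemma peval_bmin b f v : peval (pbmin b f) v = bminn (peval b v) (fun i => peval f (i :: v)).
Proof.
rewrite /=; elim: (peval b v) => //= m IH.
by rewrite peval_ite peval_lt nat_of_bool_neq0 /= peval_ite /= drop0 IH.
Qed.
Opaque pbmin.
Lemma peval_unpair1 x v : peval (punpair1 x) v = unpair1 (peval x v).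
Proof.
rewrite peval_bmin /unpair1; congr bminn; apply: functional_extensionality => a.
rewrite peval_bex; congr (nat_of_bool (bexn _ _)); apply: functional_extensionality => b.
by rewrite peval_eq peval_pair.
Qed.
Opaque punpair1.
Lemma peval_unpair2 x v : peval (punpair2 x) v = unpair2 (peval x v).
Proof.
rewrite peval_bmin /unpair2; congr bminn; apply: functional_extensionality => a.
rewrite peval_bex; congr (nat_of_bool (bexn _ _)); apply: functional_extensionality => b.
by rewrite peval_eq peval_pair.
Qed.
Opaque punpair2.
Lemma peval_tab N f v : peval (ptab N f) v = tabn (peval N v) (fun i => peval f (i :: v)).
Proof. by rewrite /= /tabn; elim: (peval N v) => //= m ->; rewrite peval_pair /= drop0. Qed.
Opaque ptab.
Lemma peval_lookup T N i v :
  peval (plookup T N i) v = lookupn (peval T v) (peval N v) (peval i v).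
Proof.
rewrite peval_unpair1 peval_pred /= peval_sub /= /lookupn; congr (unpair1 _.-1).
by elim: (_ - _) => //= m ->; rewrite peval_unpair2 peval_pred.
Qed.
Opaque plookup.
Lemma peval_let a f v : peval (plet a f) v = peval f (peval a v :: v).
Proof. by []. Qed.
Opaque plet.

Inductive hexp :=
| HVar of nat | HConst of nat | HSucc of hexp | HPred of hexp
| HPair of hexp & hexp | HFst of hexp | HSnd of hexp
| HEq of hexp & hexp | HLt of hexp & hexp | HAnd of hexp & hexp | HOr of hexp & hexp
| HNot of hexp | HIte of hexp & hexp & hexp
| HBex of hexp & hexp | HTab of hexp & hexp | HLookup of hexp & hexp & hexp
| HRec of hexp & hexp & hexp | HLet of hexp & hexp.

Fixpoint heval (e : hexp) (v : seq nat) : nat :=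
  match e with
  | HVar i => nth 0 v i
  | HConst m => m
  | HSucc a => (heval a v).+1
  | HPred a => (heval a v).-1
  | HPair a b => cpair (heval a v) (heval b v)
  | HFst a => unpair1 (heval a v)
  | HSnd a => unpair2 (heval a v)
  | HEq a b => heval a v == heval b v
  | HLt a b => heval a v < heval b v
  | HAnd a b => (heval a v != 0) && (heval b v != 0)
  | HOr a b => (heval a v != 0) || (heval b v != 0)
  | HNot a => heval a v == 0
  | HIte c t e => if heval c v != 0 then heval t v else heval e v
  | HBex b f => bexn (heval b v) (fun i => heval f (i :: v))
  | HTab n f => tabn (heval n v) (fun i => heval f (i :: v))
  | HLookup t n i => lookupn (heval t v) (heval n v) (heval i v)
  | HRec c b s => primrec (heval c v) (heval b v) (fun i a => heval s (i :: a :: v))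
  | HLet a f => heval f (heval a v :: v)
  end.

Fixpoint hcompile (e : hexp) : pexp :=
  match e with
  | HVar i => PVar i
  | HConst m => pconst m
  | HSucc a => PSucc (hcompile a)
  | HPred a => ppred (hcompile a)
  | HPair a b => ppair (hcompile a) (hcompile b)
  | HFst a => punpair1 (hcompile a)
  | HSnd a => punpair2 (hcompile a)
  | HEq a b => peq (hcompile a) (hcompile b)
  | HLt a b => plt (hcompile a) (hcompile b)
  | HAnd a b => pand (hcompile a) (hcompile b)
  | HOr a b => por (hcompile a) (hcompile b)
  | HNot a => pz (hcompile a)
  | HIte c t e => pite (hcompile c) (hcompile t) (hcompile e)
  | HBex b f => pbex (hcompile b) (hcompile f)
  | HTab n f => ptab (hcompile n) (hcompile f)
  | HLookup t n i => plookup (hcompile t) (hcompile n) (hcompile i)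
  | HRec c b s => PRec (hcompile c) (hcompile b) (hcompile s)
  | HLet a f => plet (hcompile a) (hcompile f)
  end.

Lemma peval_hcompile e : peval (hcompile e) = heval e.
Proof.
elim: e => /= [i|m|a IH|a IH|a IHa b IHb|a IH|a IH|a IHa b IHb|a IHa b IHb|a IHa b IHb
  |a IHa b IHb|a IH|c IHc t IHt f IHf|b IHb f IHf|b IHb f IHf|a IHa b IHb c IHc
  |a IHa b IHb c IHc|a IHa b IHb]; apply: functional_extensionality => v.
(* [peval_lookup] first: rewriting sees through the opaque [plookup]. *)
all: rewrite ?peval_lookup ?peval_const ?peval_pred ?peval_pair ?peval_unpair1
  ?peval_unpair2 ?peval_eq ?peval_lt ?peval_and ?peval_or ?peval_z ?peval_ite ?peval_bex
  ?peval_tab ?peval_let /=; by rewrite ?IH ?IHa ?IHb ?IHc ?IHt ?IHf.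
Qed.

Lemma eval_hcompile e v : eval (pcompile (size v) (hcompile e)) v (heval e v).
Proof. by rewrite -peval_hcompile; apply: eval_pcompile. Qed.

(** * The decision procedure *)

(* The procedure is written once over an abstract signature [ops] of
   arithmetic.  In [nat_ops] it denotes a function on [nat]; in [hexp_ops] it
   denotes a program, and the two agree by computation ([heval_DECIDE]). *)
Record ops (T : Type) := Ops {
  oconst : nat -> T; osucc : T -> T; opred : T -> T;
  opair : T -> T -> T; ofst : T -> T; osnd : T -> T;
  oeq : T -> T -> T; olt : T -> T -> T; oand : T -> T -> T; oor : T -> T -> T;
  onot : T -> T; oite : T -> T -> T -> T;
  obex : T -> (T -> T) -> T; otab : T -> (T -> T) -> T;
  olookup : T -> T -> T -> T; orec : T -> T -> (T -> T -> T) -> T;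
  olet : T -> (T -> T) -> T }.

Definition nat_ops : ops nat := Ops (fun m => m) succn predn cpair unpair1 unpair2
  (fun a b => a == b) (fun a b => a < b)
  (fun a b => (a != 0) && (b != 0)) (fun a b => (a != 0) || (b != 0))
  (fun a => a == 0) (fun c t e => if c != 0 then t else e)
  (fun b f => bexn b f) tabn lookupn primrec (fun a f => f a).

(* A program term is a function of the number [d] of enclosing binders;
   bound variables are de Bruijn levels, turned into indices by [hlevel]. *)
Definition hterm := nat -> hexp.
Definition hlevel (l : nat) : hterm := fun d => HVar (d - l.+1).

Definition hexp_ops : ops hterm := Ops (fun m _ => HConst m) (fun a d => HSucc (a d))
  (fun a d => HPred (a d)) (fun a b d => HPair (a d) (b d))
  (fun a d => HFst (a d)) (fun a d => HSnd (a d))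
  (fun a b d => HEq (a d) (b d)) (fun a b d => HLt (a d) (b d))
  (fun a b d => HAnd (a d) (b d)) (fun a b d => HOr (a d) (b d)) (fun a d => HNot (a d))
  (fun c t e d => HIte (c d) (t d) (e d))
  (fun b f d => HBex (b d) (f (hlevel d) d.+1)) (fun b f d => HTab (b d) (f (hlevel d) d.+1))
  (fun t b i d => HLookup (t d) (b d) (i d))
  (fun c b s d => HRec (c d) (b d) (s (hlevel d.+1) (hlevel d) d.+2))
  (fun a f d => HLet (a d) (f (hlevel d) d.+1)).

(* A candidate model with domain [0, mc_size): tables of the constants, of
   [R], of the other predicates occurring in the formula (at most
   [mc_npreds] entries), and of the two indistinguishability relations. *)
Record mcode (T : Type) := MCode {
  mc_size : T; mc_cons : T; mc_rel : T; mc_preds : T; mc_npreds : T;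
  mc_simx : T; mc_simy : T }.

Section Program.
Variables (T : Type) (O : ops T).
Local Notation C := (oconst O). Local Notation SUCC := (osucc O).
Local Notation PRED := (opred O). Local Notation PAIR := (opair O).
Local Notation FST := (ofst O). Local Notation SND := (osnd O).
Local Notation EQ := (oeq O). Local Notation LT := (olt O). Local Notation AND := (oand O).
Local Notation OR := (oor O). Local Notation NOT := (onot O). Local Notation ITE := (oite O).
Local Notation BEX := (obex O). Local Notation TAB := (otab O).
Local Notation LOOKUP := (olookup O). Local Notation REC := (orec O).
Local Notation LET := (olet O).

Definition IMP a b := OR (NOT a) b.
Definition BALL b f := NOT (BEX b (fun i => NOT (f i))).
Definition SCONS a l := SUCC (PAIR a l).
Definition SHEAD l := FST (PRED l).
Definition STAIL l := SND (PRED l).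
Definition SEQ_BOUND v L := REC L (C 0) (fun _ acc => SCONS v acc).

Section ModelCode.
Variables (n k pR : nat) (p : mcode T).
Local Notation d := (mc_size p).

(* A situation [(a, b)] is coded by [PAIR a b]; a set of situations by a
   table of booleans indexed by codes below [SITS]; a context
   [PAIR Sig (PAIR fl s)] holds such a set, a flag ([0]: the model's
   relations [~z]; [1]: agreement on [z], as after a [[z]] step) and a
   situation. *)
Definition SITS := PAIR d d.
Definition SITS2 := PAIR SITS SITS.
Definition GET z s := ITE (EQ z (C 0)) (FST s) (SND s).
Definition GET_OTHER z s := ITE (EQ z (C 0)) (SND s) (FST s).
Definition EX_SIT P := BEX d (fun a => BEX d (fun b => P (PAIR a b))).
Definition ALL_SIT P := BALL d (fun a => BALL d (fun b => P (PAIR a b))).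
Definition IS_SIT s := AND (LT (FST s) d) (LT (SND s) d).
Definition CONS_VAL j := LOOKUP (mc_cons p) (C n) j.
Definition REL a b := LOOKUP (mc_rel p) SITS (PAIR a b).
Definition TVAL s t := ITE (EQ (FST t) (C 0)) (CONS_VAL (SND t)) (GET (SND t) s).
Definition NBHD a := REC (C k) (TAB d (fun x => EQ x a)) (fun _ acc =>
  TAB d (fun x => OR (LOOKUP acc d x)
    (BEX d (fun u => AND (LOOKUP acc d u) (OR (REL u x) (REL x u)))))).
Definition NEAR s := LOOKUP (NBHD (SND s)) d (FST s).
Definition RZ z s s' := AND (REL (GET z s) (GET z s')) (EQ (GET_OTHER z s) (GET_OTHER z s')).
Definition MEM Sig s := LOOKUP Sig SITS s.
Definition SIM fl z s s' := ITE fl (EQ (GET z s) (GET z s'))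
  (LOOKUP (ITE (EQ z (C 0)) (mc_simx p) (mc_simy p)) SITS2 (PAIR s s')).
Definition RESTR Sig fl s s0 :=
  AND (MEM Sig s0) (OR (SIM fl (C 0) s s0) (SIM fl (C 1) s s0)).
Definition NEWSIG Sig fl z s s2 := ITE (NEAR s2) (TAB SITS (fun t => EQ t s2))
  (TAB SITS (fun t => AND (IS_SIT t) (AND (NOT (NEAR t))
     (EX_SIT (fun s0 => AND (RESTR Sig fl s s0) (RZ z s0 t)))))).
Definition ARGS tc s := SND (REC tc (PAIR tc (C 0)) (fun _ st => ITE (EQ (FST st) (C 0)) st
   (PAIR (STAIL (FST st)) (SCONS (TVAL s (SHEAD (FST st))) (SND st))))).
Definition ATOM pc tc s :=
  ITE (EQ pc (C pR)) (REL (TVAL s (SHEAD tc)) (TVAL s (SHEAD (STAIL tc))))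
    (LOOKUP (mc_preds p) (mc_npreds p) (PAIR pc (ARGS tc s))).

(* One step of the course-of-values recursion on formula codes: [h] holds,
   for every code [g < c], the table of truth values of [g] over all
   contexts below [K]. *)
Definition SAT_STEP K c h ctx :=
  LET (FST ctx) (fun Sig => LET (FST (SND ctx)) (fun fl => LET (SND (SND ctx)) (fun s =>
  LET (FST c) (fun tag => LET (SND c) (fun r =>
  let SAT g ctx' := LOOKUP (LOOKUP h c g) K ctx' in
  ITE (EQ tag (C 0)) (ATOM (FST r) (SND r) s)
  (ITE (EQ tag (C 1)) (EQ (TVAL s (FST r)) (TVAL s (SND r)))
  (ITE (EQ tag (C 2)) (NOT (SAT r ctx))
  (ITE (EQ tag (C 3)) (AND (SAT (FST r) ctx) (SAT (SND r) ctx))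
  (ITE (EQ tag (C 4)) (ALL_SIT (fun s2 => IMP (RZ (FST r) s s2)
        (SAT (SND r) (PAIR (NEWSIG Sig fl (FST r) s s2) (PAIR (C 1) s2)))))
  (ITE (EQ tag (C 5)) (ALL_SIT (fun s1 => ALL_SIT (fun s2 =>
        IMP (MEM Sig s1) (IMP (MEM Sig s2)
        (IMP (SIM fl (FST r) s s1) (IMP (SIM fl (FST r) s s2)
        (EQ (TVAL s1 (SND r)) (TVAL s2 (SND r)))))))))
  (ALL_SIT (fun s' => IMP (MEM Sig s') (IMP (SIM fl (FST r) s s')
        (SAT (SND r) (PAIR Sig (PAIR fl s')))))))))))))))).
Definition SAT_HIST K c :=
  REC c (C 0) (fun i acc => SCONS (TAB K (fun ctx => SAT_STEP K i acc ctx)) acc).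
Definition SAT_TABLE K c := TAB K (fun ctx => SAT_STEP K c (SAT_HIST K c) ctx).

Definition CONS_OK := AND (BALL (C n) (fun j => LT (CONS_VAL j) d))
                          (BALL d (fun a => BEX (C n) (fun j => EQ (CONS_VAL j) a))).
Definition SERIAL := BALL d (fun a => BEX d (fun b => REL a b)).
Definition SIM_REFL Sig z := ALL_SIT (fun s => IMP (MEM Sig s) (SIM (C 0) z s s)).
Definition SIM_SYM Sig z := ALL_SIT (fun s => ALL_SIT (fun t =>
   IMP (MEM Sig s) (IMP (MEM Sig t) (IMP (SIM (C 0) z s t) (SIM (C 0) z t s))))).
Definition SIM_TRANS Sig z := ALL_SIT (fun s => ALL_SIT (fun t => ALL_SIT (fun u =>
   IMP (MEM Sig s) (IMP (MEM Sig t) (IMP (MEM Sig u)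
   (IMP (SIM (C 0) z s t) (IMP (SIM (C 0) z t u) (SIM (C 0) z s u)))))))).
Definition SIM_EQUIV Sig z := AND (SIM_REFL Sig z) (AND (SIM_SYM Sig z) (SIM_TRANS Sig z)).
Definition SIM_OK Sig := AND (SIM_EQUIV Sig (C 0)) (SIM_EQUIV Sig (C 1)).
Definition KSIGHT_AT Sig z z' := ALL_SIT (fun s => ALL_SIT (fun s' =>
   IMP (MEM Sig s) (IMP (MEM Sig s') (IMP (SIM (C 0) z s s')
   (IMP (LOOKUP (NBHD (GET z s)) d (GET z' s)) (EQ (GET z' s) (GET z' s'))))))).
Definition KSIGHT Sig := AND (AND (KSIGHT_AT Sig (C 0) (C 0)) (KSIGHT_AT Sig (C 0) (C 1)))
                             (AND (KSIGHT_AT Sig (C 1) (C 0)) (KSIGHT_AT Sig (C 1) (C 1))).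
End ModelCode.

Definition DECIDE n k pR code :=
  BEX (SUCC (C n)) (fun d => AND (LT (C 0) d) (
  BEX (SUCC (SEQ_BOUND (C n) (C n))) (fun ICL =>
  BEX (SUCC (SEQ_BOUND (C 1) (PAIR d d))) (fun RL =>
  LET (SUCC (PAIR code (SEQ_BOUND (C n) code))) (fun NM =>
  BEX (SUCC (SEQ_BOUND (C 1) NM)) (fun ML =>
  BEX (SUCC (SEQ_BOUND (C 1) (PAIR (PAIR d d) (PAIR d d)))) (fun SX =>
  BEX (SUCC (SEQ_BOUND (C 1) (PAIR (PAIR d d) (PAIR d d)))) (fun SY =>
  let p := MCode d ICL RL ML NM SX SY in
  AND (CONS_OK n p) (AND (SERIAL p) (
  LET (SEQ_BOUND (C 1) (PAIR d d)) (fun BS =>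
  LET (SUCC (PAIR BS (PAIR (C 1) (PAIR d d)))) (fun K =>
  BEX (SUCC BS) (fun Sig0 => AND (SIM_OK p Sig0) (AND (KSIGHT k p Sig0)
    (EX_SIT p (fun s => AND (MEM p Sig0 s)
       (LOOKUP (SAT_TABLE n k pR p K code) K (PAIR Sig0 (PAIR (C 0) s))))))))))))))))))).
End Program.

Lemma heval_DECIDE n k pR code :
  heval (DECIDE hexp_ops n k pR (hlevel 0) 1) [:: code] = DECIDE nat_ops n k pR code.
Proof.
cbv beta iota zeta delta [DECIDE SAT_STEP SAT_HIST SAT_TABLE IMP BALL SCONS SHEAD STAIL
  SEQ_BOUND SITS SITS2 GET GET_OTHER EX_SIT ALL_SIT IS_SIT CONS_VAL REL TVAL NBHD NEAR RZ MEM
  SIM RESTR NEWSIG ARGS ATOM CONS_OK SERIAL SIM_REFL SIM_SYM SIM_TRANS SIM_EQUIV SIM_OK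
  KSIGHT_AT KSIGHT heval hexp_ops nat_ops hlevel nth subn minus oconst osucc opred opair ofst
  osnd oeq olt oand oor onot oite obex otab olookup orec olet mc_size mc_cons mc_rel mc_preds
  mc_npreds mc_simx mc_simy].
reflexivity.
Qed.

Arguments GET : simpl never.  Arguments GET_OTHER : simpl never.
Arguments TVAL : simpl never.  Arguments CONS_VAL : simpl never.
Arguments REL : simpl never.  Arguments NBHD : simpl never.
Arguments NEAR : simpl never.  Arguments RZ : simpl never.
Arguments MEM : simpl never.  Arguments SIM : simpl never.
Arguments RESTR : simpl never.  Arguments NEWSIG : simpl never.
Arguments ARGS : simpl never.  Arguments ATOM : simpl never.
Arguments SAT_STEP : simpl never.  Arguments SAT_HIST : simpl never.
Arguments SAT_TABLE : simpl never.  Arguments ALL_SIT : simpl never.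
Arguments EX_SIT : simpl never.  Arguments IS_SIT : simpl never.
Arguments SITS : simpl never.  Arguments SITS2 : simpl never.
Arguments IMP : simpl never.  Arguments BALL : simpl never.
Arguments SCONS : simpl never.  Arguments SHEAD : simpl never.
Arguments STAIL : simpl never.  Arguments SEQ_BOUND : simpl never.
Arguments CONS_OK : simpl never.  Arguments SERIAL : simpl never.
Arguments SIM_REFL : simpl never.  Arguments SIM_SYM : simpl never.
Arguments SIM_TRANS : simpl never.  Arguments SIM_EQUIV : simpl never.
Arguments SIM_OK : simpl never.  Arguments KSIGHT_AT : simpl never.
Arguments KSIGHT : simpl never.  Arguments DECIDE : simpl never.

Lemma IMP_E a b : (IMP nat_ops a b != 0) = (a != 0) ==> (b != 0).
Proof. by rewrite /IMP /= !nat_of_bool_neq0; case: (a == 0). Qed.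
Lemma AND_E a b : (oand nat_ops a b != 0) = (a != 0) && (b != 0).
Proof. exact: nat_of_bool_neq0. Qed.
Lemma AND_P a b : reflect (a != 0 /\ b != 0) (oand nat_ops a b != 0).
Proof. by rewrite AND_E; apply: andP. Qed.
Lemma OR_E a b : (oor nat_ops a b != 0) = (a != 0) || (b != 0).
Proof. exact: nat_of_bool_neq0. Qed.
Lemma NOT_E a : (onot nat_ops a != 0) = (a == 0).
Proof. exact: nat_of_bool_neq0. Qed.
Lemma EQ_E a b : (oeq nat_ops a b != 0) = (a == b).
Proof. exact: nat_of_bool_neq0. Qed.
Lemma LT_E a b : (olt nat_ops a b != 0) = (a < b).
Proof. exact: nat_of_bool_neq0. Qed.
Lemma ITE_E c t e : oite nat_ops c t e = if c != 0 then t else e.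
Proof. by []. Qed.

Lemma BEX_P b f : reflect (exists2 i, i < b & f i != 0) (obex nat_ops b f != 0).
Proof. by rewrite /= nat_of_bool_neq0; apply: bexnP. Qed.

Lemma BALL_P b f : reflect (forall i, i < b -> f i != 0) (BALL nat_ops b f != 0).
Proof.
rewrite /BALL NOT_E /= eqb0; apply: (iffP negP) => [H i Hi | H].
- by apply/negP => /eqP E; apply: H; apply/bexnP; exists i => //; rewrite E.
- by move=> /bexnP [i Hi]; rewrite nat_of_bool_neq0 => /eqP; apply/eqP/H.
Qed.

Lemma GET_E z s : GET nat_ops z s = if z == 0 then unpair1 s else unpair2 s.
Proof. by rewrite /GET /= nat_of_bool_neq0. Qed.
Lemma GET_OTHER_E z s : GET_OTHER nat_ops z s = if z == 0 then unpair2 s else unpair1 s.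
Proof. by rewrite /GET_OTHER /= nat_of_bool_neq0. Qed.

Fixpoint enc_seq (l : seq nat) : nat :=
  if l is a :: l' then (cpair a (enc_seq l')).+1 else 0.

Lemma enc_seq_inj : injective enc_seq.
Proof. by elim=> [|a l IH] [|b l'] //= [] /cpair_inj [-> /IH ->]. Qed.

Lemma leq_size_enc_seq l : size l <= enc_seq l.
Proof. by elim: l => //= a l IH; rewrite ltnS (leq_trans IH) ?leq_cpairr. Qed.

Lemma encts_enc_seq (Cons : finType) (ts : seq (term Cons)) :
  encts ts = enc_seq (map (@enct _) ts).
Proof. by elim: ts => //= t ts ->. Qed.

Lemma SEQ_BOUND_E v L : SEQ_BOUND nat_ops v L = primrec L 0 (fun _ a => (cpair v a).+1).
Proof. by []. Qed.

Lemma enc_seq_bound l v L : size l <= L -> all (fun x => x <= v) l ->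
  enc_seq l <= SEQ_BOUND nat_ops v L.
Proof.
rewrite SEQ_BOUND_E; elim: l L => [|a l IH] [|L] //= Hs /andP [Ha Hl].
by rewrite ltnS leq_cpair // IH.
Qed.

Lemma tabn_bound L f v : (forall i, i < L -> f i <= v) -> tabn L f <= SEQ_BOUND nat_ops v L.
Proof.
rewrite SEQ_BOUND_E /tabn; elim: L => //= L IH H.
by rewrite ltnS leq_cpair // ?H // IH // => i Hi; rewrite H // ltnW.
Qed.

Lemma ARGS_E n p (tv : nat -> nat) s (l : seq nat) :
  (forall t, TVAL nat_ops n p s t = tv t) ->
  ARGS nat_ops n p (enc_seq l) s = enc_seq (rev (map tv l)).
Proof.
move=> Htv; rewrite /ARGS /= primrec_iter.
set f := fun st => _.
suff shift : forall l acc m, size l <= m ->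
    iter m f (cpair (enc_seq l) (enc_seq acc)) = cpair 0 (enc_seq (rev (map tv l) ++ acc)).
  by rewrite (shift l [::] _ (leq_size_enc_seq l)) unpair2_cpair cats0.
elim=> [|a l' IH] acc m Hm /=.
  by elim: m {Hm} => //= m ->; rewrite /f unpair1_cpair.
case: m Hm => // m Hm; rewrite iterSr.
have -> : f (cpair (enc_seq (a :: l')) (enc_seq acc)) = cpair (enc_seq l') (enc_seq (tv a :: acc)).
  by rewrite /f unpair1_cpair /= /STAIL /SHEAD /= !unpair1_cpair !unpair2_cpair Htv.
by rewrite IH // rev_cons cat_rcons.
Qed.

Fixpoint occ (Pred : eqType) (Cons : Type) (P : Pred) (f : form Pred Cons) : bool :=
  match f with
  | FAtom Q _ => Q == P
  | FEq _ _ | FKt _ _ => false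
  | FNeg g | FBox _ g | FK _ g => occ P g
  | FAnd g h => occ P g || occ P h
  end.

Lemma occ_pickle (Pred : countType) (Cons : finType) (P : Pred) (phi : form Pred Cons) :
  occ P phi -> pickle P <= encf phi.
Proof.
have le_sub a b c : a <= b -> a <= cpair c b by move=> H; rewrite (leq_trans H) ?leq_cpairr.
elim: phi => [Q ts|t1 t2|g IH|g IHg h IHh|z g IH|z t|z g IH] //=.
- by move=> /eqP ->; rewrite le_sub ?leq_cpairl.
- by move=> /IH; apply: le_sub.
- by case/orP => [/IHg|/IHh] H; rewrite le_sub // (leq_trans H) ?leq_cpairl ?leq_cpairr.
- by move=> /IH H; rewrite !le_sub.
- by move=> /IH H; rewrite !le_sub.
Qed.

Lemma occ_arity (Pred : countType) (Cons : finType) (arity : Pred -> nat) (P : Pred)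
    (phi : form Pred Cons) :
  wf arity phi -> occ P phi -> arity P <= encf phi.
Proof.
have le_sub a b c : a <= b -> a <= cpair c b by move=> H; rewrite (leq_trans H) ?leq_cpairr.
elim: phi => [Q ts|t1 t2|g IH|g IHg h IHh|z g IH|z t|z g IH] //=.
- move=> /eqP Hs /eqP <-; rewrite -Hs !le_sub // encts_enc_seq.
  by rewrite (leq_trans _ (leq_size_enc_seq _)) ?size_map.
- by move=> Hw /(IH Hw); apply: le_sub.
- move=> /andP [Hg Hh] /orP [/(IHg Hg)|/(IHh Hh)] H.
  + by rewrite le_sub // (leq_trans H) ?leq_cpairl.
  + by rewrite le_sub // (leq_trans H) ?leq_cpairr.
- by move=> Hw /(IH Hw) H; rewrite !le_sub.
- by move=> Hw /(IH Hw) H; rewrite !le_sub.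
Qed.

Arguments unpair1 : simpl never.  Arguments unpair2 : simpl never.
Arguments cpair : simpl never.  Arguments lookupn : simpl never.
Arguments tabn : simpl never.

(** * Correctness of the truth tables *)

Definition sig_bound (p : mcode nat) := SEQ_BOUND nat_ops 1 (cpair (mc_size p) (mc_size p)).
Definition ctx_bound (p : mcode nat) :=
  (cpair (sig_bound p) (cpair 1 (cpair (mc_size p) (mc_size p)))).+1.

Definition sat_at n k pR (p : mcode nat) c ctx :=
  lookupn (SAT_TABLE nat_ops n k pR p (ctx_bound p) c) (ctx_bound p) ctx.

Section SatTable.
Variables (k : nat) (Pred : countType) (arity : Pred -> nat) (R : Pred) (Cons : finType).
Hypothesis arity_R : arity R = 2.
Local Notation n := #|Cons|.
Local Notation pR := (pickle R).
Variables (D : finType) (I : Pred -> pred (seq D)) (Ic : Cons -> D).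
Variables (p : mcode nat) (e : D -> nat).
Local Notation d := (mc_size p).
Hypotheses (e_inj : injective e) (e_lt : forall x, e x < d)
  (e_onto : forall a, a < d -> exists x, e x = a).
Hypothesis cons_coded : forall c, lookupn (mc_cons p) n (enum_rank c) = e (Ic c).
Hypothesis rel_coded :
  forall a b, (lookupn (mc_rel p) (cpair d d) (cpair (e a) (e b)) != 0) = Rrel R I a b.

Definition sit_code (s : D * D) := cpair (e s.1) (e s.2).

Lemma e_eq x y : (e x == e y) = (x == y).
Proof. exact: (inj_eq e_inj). Qed.

Lemma sit_code_eq s s' : (sit_code s == sit_code s') = (s == s').
Proof.
apply/eqP/eqP => [|-> //]; case: s s' => [a b] [a' b'].
by case/cpair_inj => /e_inj /= -> /e_inj ->.
Qed.

Lemma sit_code_lt s : sit_code s < cpair d d.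
Proof. by rewrite (leq_trans (ltn_cpair2l _ (e_lt _))) // leq_cpair // ltnW. Qed.

Lemma ALL_SIT_P (P : nat -> nat) :
  reflect (forall s : D * D, P (sit_code s) != 0) (ALL_SIT nat_ops p P != 0).
Proof.
rewrite /ALL_SIT; apply: (iffP (BALL_P _ _)) => [H [x y] | H a Ha].
- by have /BALL_P := H _ (e_lt x); apply; apply: e_lt.
- apply/BALL_P => b Hb; have [x <-] := e_onto Ha; have [y <-] := e_onto Hb.
  exact: (H (x, y)).
Qed.

Lemma EX_SIT_P (P : nat -> nat) :
  reflect (exists s : D * D, P (sit_code s) != 0) (EX_SIT nat_ops p P != 0).
Proof.
rewrite /EX_SIT; apply: (iffP (BEX_P _ _)) => [[a Ha /BEX_P [b Hb H]] | [[x y] H]].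
- have [x Ex] := e_onto Ha; have [y Ey] := e_onto Hb.
  by exists (x, y); rewrite /sit_code /= Ex Ey.
- by exists (e x) => //; apply/BEX_P; exists (e y).
Qed.

Lemma BALL_dom_P (P : nat -> nat) :
  reflect (forall x : D, P (e x) != 0) (BALL nat_ops d P != 0).
Proof.
apply: (iffP (BALL_P _ _)) => [H x | H a Ha]; first exact: H.
by have [x <-] := e_onto Ha.
Qed.

Lemma BEX_dom_P (P : nat -> nat) :
  reflect (exists x : D, P (e x) != 0) (obex nat_ops d P != 0).
Proof.
apply: (iffP (BEX_P _ _)) => [[a Ha H] | [x H]]; last by exists (e x).
by have [x Ex] := e_onto Ha; exists x; rewrite Ex.
Qed.

Lemma GET_sit_code z s : GET nat_ops (var_code z) (sit_code s) = e (get s z).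
Proof. by rewrite GET_E; case: z; rewrite /= ?unpair1_cpair ?unpair2_cpair. Qed.

Lemma GET_OTHER_sit_code z s :
  GET_OTHER nat_ops (var_code z) (sit_code s) = e (get s (other z)).
Proof. by rewrite GET_OTHER_E; case: z; rewrite /= ?unpair1_cpair ?unpair2_cpair. Qed.

Lemma TVAL_sit_code s t : TVAL nat_ops n p (sit_code s) (enct t) = e (Defs.tval Ic s t).
Proof.
rewrite /TVAL /CONS_VAL ITE_E EQ_E.
by case: t => [c|z] /=; rewrite unpair1_cpair unpair2_cpair /= -?GET_sit_code.
Qed.

Lemma REL_E a b : (REL nat_ops p (e a) (e b) != 0) = Rrel R I a b.
Proof. exact: rel_coded. Qed.

Lemma NBHD_E a x : (lookupn (NBHD nat_ops k p (e a)) d (e x) != 0) = (x \in Dk R I k a).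
Proof.
rewrite /NBHD /=; elim: k x => [|m IH] x /=.
  by rewrite lookupn_tabn // nat_of_bool_neq0 in_set1 e_eq.
rewrite lookupn_tabn // nat_of_bool_neq0 in_setU IH inE; congr orb.
apply/BEX_dom_P/existsP => [[u]|[u /andP [Hu Hr]]].
  by rewrite AND_E OR_E !REL_E IH => /andP [Hu Hr]; exists u; rewrite Hu.
by exists u; rewrite AND_E OR_E !REL_E IH Hu.
Qed.

Lemma NEAR_E s : (NEAR nat_ops k p (sit_code s) != 0) = near k R I s.
Proof. by rewrite /NEAR /= unpair1_cpair unpair2_cpair NBHD_E. Qed.

Lemma RZ_E z s s' : (RZ nat_ops p (var_code z) (sit_code s) (sit_code s') != 0) = Rz R I z s s'.
Proof. by rewrite /RZ AND_E !GET_sit_code !GET_OTHER_sit_code REL_E EQ_E e_eq. Qed.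

Lemma IS_SIT_sit_code s : IS_SIT nat_ops p (sit_code s) != 0.
Proof. by rewrite /IS_SIT AND_E !LT_E /sit_code /= unpair1_cpair unpair2_cpair !e_lt. Qed.

Lemma MEM_tabn f s : MEM nat_ops p (tabn (cpair d d) f) (sit_code s) = f (sit_code s).
Proof. by rewrite /MEM /SITS /= lookupn_tabn // sit_code_lt. Qed.

Definition codes_set SigC (Sig : {set D * D}) :=
  forall s, (s \in Sig) = (MEM nat_ops p SigC (sit_code s) != 0).

Definition codes_sim fl (sim : Var -> rel (D * D)) := forall z s s',
  sim z s s' = (SIM nat_ops p fl (var_code z) (sit_code s) (sit_code s') != 0).

Definition codes_preds (phi : form Pred Cons) := forall P l,
  occ P phi -> size l = arity P -> pickle P != pR ->
  I P l = (lookupn (mc_preds p) (mc_npreds p) (cpair (pickle P) (enc_seq (rev (map e l)))) != 0).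

Lemma codes_newsim : codes_sim 1 (@newsim D).
Proof. by move=> w a b; rewrite /SIM ITE_E /= EQ_E !GET_sit_code e_eq. Qed.

Lemma RESTR_E SigC fl Sig sim s s0 : codes_set SigC Sig -> codes_sim fl sim ->
  (RESTR nat_ops p SigC fl (sit_code s) (sit_code s0) != 0) = (s0 \in restr Sig sim s).
Proof.
move=> HS Hsim; rewrite /RESTR AND_E OR_E /restr inE HS; congr andb.
rewrite (_ : 0 = var_code vx) // (_ : 1 = var_code vy) // -!Hsim.
by apply/orP/existsP => [[H|H] | [[] H]]; [exists true | exists false | left | right].
Qed.

Lemma codes_newSigma SigC fl Sig sim z s s2 : codes_set SigC Sig -> codes_sim fl sim ->
  codes_set (NEWSIG nat_ops k p SigC fl (var_code z) (sit_code s) (sit_code s2))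
            (newSigma k R I Sig sim z s s2).
Proof.
move=> HS Hsim t; rewrite /newSigma /NEWSIG ITE_E NEAR_E.
case: (near k R I s2); rewrite /SITS /= MEM_tabn.
  by rewrite EQ_E sit_code_eq in_set1.
rewrite AND_E IS_SIT_sit_code AND_E NOT_E -(negbK (_ == 0)) NEAR_E /= !inE andbC.
congr andb; apply/existsP/EX_SIT_P => [[s0 /andP [H1 H2]] | [s0]].
  by exists s0; rewrite nat_of_bool_neq0 RZ_E H2 (RESTR_E _ _ HS Hsim) H1.
by rewrite nat_of_bool_neq0 RZ_E (RESTR_E _ _ HS Hsim) => /andP [H1 H2]; exists s0; rewrite H1.
Qed.

Lemma NEWSIG_bound SigC fl z s s2 : NEWSIG nat_ops k p SigC fl z s s2 <= sig_bound p.
Proof.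
by rewrite /NEWSIG ITE_E /SITS /=; case: ifP => _; apply: tabn_bound => i _;
  apply: leq_nat_of_bool1.
Qed.

Lemma ATOM_E (P : Pred) (ts : seq (term Cons)) s :
  size ts = arity P ->
  (pickle P != pR -> I P [seq Defs.tval Ic s t | t <- ts] =
     (lookupn (mc_preds p) (mc_npreds p)
       (cpair (pickle P) (enc_seq (rev (map e [seq Defs.tval Ic s t | t <- ts])))) != 0)) ->
  (ATOM nat_ops n pR p (pickle P) (encts ts) (sit_code s) != 0) =
    I P [seq Defs.tval Ic s t | t <- ts].
Proof.
move=> Hsz HP; rewrite /ATOM ITE_E EQ_E.
case: (eqVneq (pickle P) pR) => [/(pcan_inj pickleK) EP | NE].
  move: Hsz HP; rewrite EP arity_R; case: ts => [|t1 [|t2 []]] //= _ _.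
  by rewrite /SHEAD /STAIL /= !unpair1_cpair !unpair2_cpair !unpair1_cpair !TVAL_sit_code REL_E.
rewrite HP //=; congr (lookupn _ _ (cpair _ _) != 0).
rewrite encts_enc_seq (@ARGS_E n p (TVAL nat_ops n p (sit_code s))) // -!map_comp.
by congr (enc_seq (rev _)); apply: eq_map => t /=; rewrite TVAL_sit_code.
Qed.

Lemma sat_atE c ctx : ctx < ctx_bound p ->
  sat_at n k pR p c ctx =
  SAT_STEP nat_ops n k pR p (ctx_bound p) c (SAT_HIST nat_ops n k pR p (ctx_bound p) c) ctx.
Proof. by move=> H; rewrite /sat_at /SAT_TABLE /= lookupn_tabn. Qed.

Lemma SAT_HIST_E c g : g < c ->
  lookupn (SAT_HIST nat_ops n k pR p (ctx_bound p) c) c g =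
  SAT_TABLE nat_ops n k pR p (ctx_bound p) g.
Proof. by move=> H; rewrite /SAT_HIST /SCONS /= lookupn_hist. Qed.

Lemma SAT_HIST_sat_at c g ctx : g < c ->
  lookupn (lookupn (SAT_HIST nat_ops n k pR p (ctx_bound p) c) c g) (ctx_bound p) ctx =
  sat_at n k pR p g ctx.
Proof. by move=> H; rewrite SAT_HIST_E. Qed.

Lemma ctx_lt_bound SigC fl s : SigC <= sig_bound p -> fl <= 1 ->
  cpair SigC (cpair fl (sit_code s)) < ctx_bound p.
Proof. by move=> H1 H2; rewrite ltnS !leq_cpair // ltnW // sit_code_lt. Qed.

Lemma ltn_code_arg2 c a b : b < cpair c.+1 (cpair a b).
Proof. exact: leq_ltn_trans (leq_cpairr _ _) (ltn_cpair_succ _ _). Qed.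

Lemma ltn_code_arg1 c a b : a < cpair c.+1 (cpair a b).
Proof. exact: leq_ltn_trans (leq_cpairl _ _) (ltn_cpair_succ _ _). Qed.

Lemma CONS_OK_P : CONS_OK nat_ops n p != 0 <-> forall x, exists c, Ic c = x.
Proof.
have rank_onto j : j < n -> exists c : Cons, enum_rank c = j :> nat.
  by move=> Hj; exists (enum_val (Ordinal Hj : 'I_#|Cons|)); rewrite enum_valK.
rewrite /CONS_OK AND_E; split => [/andP [_ /BALL_dom_P H] x | H].
  have /BEX_P [j /rank_onto [c <-]] := H x.
  by rewrite EQ_E /CONS_VAL /= cons_coded e_eq => /eqP <-; exists c.
apply/andP; split.
  by apply/BALL_P => j /rank_onto [c <-]; rewrite LT_E /CONS_VAL /= cons_coded.
apply/BALL_dom_P => x; have [c <-] := H x.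
by apply/BEX_P; exists (enum_rank c) => //; rewrite EQ_E /CONS_VAL /= cons_coded.
Qed.

Lemma SERIAL_P : SERIAL nat_ops p != 0 <-> forall a, exists b, Rrel R I a b.
Proof.
split => [/BALL_dom_P H a | H]; first by have /BEX_dom_P [b] := H a; rewrite REL_E; exists b.
by apply/BALL_dom_P => a; have [b Hb] := H a; apply/BEX_dom_P; exists b; rewrite REL_E.
Qed.

Definition equiv_on (Sig : {set D * D}) (r : rel (D * D)) :=
  [/\ forall s, s \in Sig -> r s s,
      forall s t, s \in Sig -> t \in Sig -> r s t -> r t s &
      forall s t u, s \in Sig -> t \in Sig -> u \in Sig -> r s t -> r t u -> r s u].

Section CodedSituations.
Variables (SigC : nat) (Sig : {set D * D}) (sim : Var -> rel (D * D)).
Hypotheses (HS : codes_set SigC Sig) (Hsim : codes_sim 0 sim).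

Lemma SIM_EQUIV_P z : SIM_EQUIV nat_ops p SigC (var_code z) != 0 <-> equiv_on Sig (sim z).
Proof.
rewrite /SIM_EQUIV /SIM_REFL /SIM_SYM /SIM_TRANS !AND_E.
split => [/and3P [/ALL_SIT_P Hr /ALL_SIT_P Hs /ALL_SIT_P Ht] | [Hr Hs Ht]].
  split => [s | s t | s t u]; rewrite !HS !Hsim.
  - by have := Hr s; rewrite IMP_E => /implyP.
  - by move: (Hs s) => /ALL_SIT_P /(_ t); rewrite !IMP_E => /implyP H /H /implyP H' /H' /implyP.
  - move: (Ht s) => /ALL_SIT_P /(_ t) /ALL_SIT_P /(_ u); rewrite !IMP_E.
    by move=> /implyP H /H /implyP H1 /H1 /implyP H2 /H2 /implyP H3 /H3 /implyP.
apply/and3P; split; apply/ALL_SIT_P => s; rewrite ?IMP_E -?HS.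
  by rewrite -Hsim; apply/implyP/Hr.
  by apply/ALL_SIT_P => t; rewrite !IMP_E -!HS -!Hsim; do 2 apply/implyP => ?; apply/implyP/Hs.
apply/ALL_SIT_P => t; apply/ALL_SIT_P => u; rewrite !IMP_E -!HS -!Hsim.
by do 4 apply/implyP => ?; apply/implyP; apply: Ht; eassumption.
Qed.

Lemma KSIGHT_AT_P z z' :
  KSIGHT_AT nat_ops k p SigC (var_code z) (var_code z') != 0 <->
  forall s s', s \in Sig -> s' \in Sig -> sim z s s' ->
    get s z' \in Dk R I k (get s z) -> get s z' = get s' z'.
Proof.
rewrite /KSIGHT_AT; split => [/ALL_SIT_P H s s' H1 H2 H3 H4 | H].
  move: (H s) => /ALL_SIT_P /(_ s').
  rewrite !IMP_E -!HS -Hsim !GET_sit_code NBHD_E EQ_E e_eq H1 H2 H3 H4.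
  by move=> /eqP.
apply/ALL_SIT_P => s; apply/ALL_SIT_P => s'.
rewrite !IMP_E -!HS -Hsim !GET_sit_code NBHD_E EQ_E e_eq.
by do 4 apply/implyP => ?; apply/eqP/H.
Qed.
End CodedSituations.

Section Step.
Variables (K h SigC fl s : nat).
Local Notation ctx := (cpair SigC (cpair fl s)).
Local Notation STEP c := (SAT_STEP nat_ops n k pR p K c h ctx).
Local Notation SAT c g ctx' := (lookupn (lookupn h c g) K ctx').

Lemma SAT_STEP_atom r : STEP (cpair 0 r) = ATOM nat_ops n pR p (unpair1 r) (unpair2 r) s.
Proof. by rewrite /SAT_STEP /= !unpair1_cpair !unpair2_cpair !unpair1_cpair. Qed.

Lemma SAT_STEP_eq r :
  STEP (cpair 1 r) = oeq nat_ops (TVAL nat_ops n p s (unpair1 r)) (TVAL nat_ops n p s (unpair2 r)).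
Proof. by rewrite /SAT_STEP /= !unpair1_cpair !unpair2_cpair !unpair1_cpair. Qed.

Lemma SAT_STEP_neg r : STEP (cpair 2 r) = onot nat_ops (SAT (cpair 2 r) r ctx).
Proof. by rewrite /SAT_STEP /= !unpair1_cpair !unpair2_cpair !unpair1_cpair. Qed.

Lemma SAT_STEP_and r : STEP (cpair 3 r) =
  oand nat_ops (SAT (cpair 3 r) (unpair1 r) ctx) (SAT (cpair 3 r) (unpair2 r) ctx).
Proof. by rewrite /SAT_STEP /= !unpair1_cpair !unpair2_cpair !unpair1_cpair. Qed.

Lemma SAT_STEP_box r : STEP (cpair 4 r) =
  ALL_SIT nat_ops p (fun s2 => IMP nat_ops (RZ nat_ops p (unpair1 r) s s2)
    (SAT (cpair 4 r) (unpair2 r)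
      (cpair (NEWSIG nat_ops k p SigC fl (unpair1 r) s s2) (cpair 1 s2)))).
Proof. by rewrite /SAT_STEP /= !unpair1_cpair !unpair2_cpair !unpair1_cpair. Qed.

Lemma SAT_STEP_Kt r : STEP (cpair 5 r) =
  ALL_SIT nat_ops p (fun s1 => ALL_SIT nat_ops p (fun s2 =>
    IMP nat_ops (MEM nat_ops p SigC s1) (IMP nat_ops (MEM nat_ops p SigC s2)
    (IMP nat_ops (SIM nat_ops p fl (unpair1 r) s s1)
    (IMP nat_ops (SIM nat_ops p fl (unpair1 r) s s2)
    (oeq nat_ops (TVAL nat_ops n p s1 (unpair2 r)) (TVAL nat_ops n p s2 (unpair2 r)))))))).
Proof. by rewrite /SAT_STEP /= !unpair1_cpair !unpair2_cpair !unpair1_cpair. Qed.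

Lemma SAT_STEP_K r : STEP (cpair 6 r) =
  ALL_SIT nat_ops p (fun s' => IMP nat_ops (MEM nat_ops p SigC s')
    (IMP nat_ops (SIM nat_ops p fl (unpair1 r) s s')
      (SAT (cpair 6 r) (unpair2 r) (cpair SigC (cpair fl s'))))).
Proof. by rewrite /SAT_STEP /= !unpair1_cpair !unpair2_cpair !unpair1_cpair. Qed.
End Step.
Lemma sat_at_correct phi : wf arity phi -> codes_preds phi ->
  forall SigC fl Sig sim, SigC <= sig_bound p -> fl <= 1 ->
  codes_set SigC Sig -> codes_sim fl sim ->
  forall s, sat_at n k pR p (encf phi) (cpair SigC (cpair fl (sit_code s))) != 0 <->
            sat k R I Ic Sig sim phi s.
Proof.
elim: phi => [P ts|t1 t2|g IHg|g IHg h IHh|z g IHg|z t|z g IHg] Hwf Hpreds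
  SigC fl Sig sim HSb Hfl HS Hsim s; rewrite sat_atE ?ctx_lt_bound // [encf _]/=.
- rewrite SAT_STEP_atom unpair1_cpair unpair2_cpair ATOM_E //; first exact/eqP.
  by move=> Hn; apply: Hpreds => //; [rewrite /= eqxx | rewrite size_map; apply/eqP].
- by rewrite SAT_STEP_eq !unpair1_cpair !unpair2_cpair EQ_E !TVAL_sit_code e_eq; split => /eqP.
- rewrite SAT_STEP_neg NOT_E SAT_HIST_sat_at ?ltn_cpair_succ //.
  have IH := IHg Hwf Hpreds _ _ _ _ HSb Hfl HS Hsim s.
  split => [/eqP x0 /IH | Hn]; first by rewrite x0.
  by apply/negbNE/negP => /IH.
- move: Hwf => /andP [Hwg Hwh].
  rewrite SAT_STEP_and AND_E unpair1_cpair unpair2_cpair !SAT_HIST_sat_at ?ltn_code_arg1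
    ?ltn_code_arg2 //.
  have Hg : codes_preds g by move=> P l o; apply: Hpreds; rewrite /= o.
  have Hh : codes_preds h by move=> P l o; apply: Hpreds; rewrite /= o orbT.
  have [IHg1 IHg2] := IHg Hwg Hg _ _ _ _ HSb Hfl HS Hsim s.
  have [IHh1 IHh2] := IHh Hwh Hh _ _ _ _ HSb Hfl HS Hsim s.
  by split => [/andP [/IHg1 ? /IHh1 ?] | [/IHg2 -> /IHh2 ->]].
- rewrite SAT_STEP_box !unpair1_cpair !unpair2_cpair SAT_HIST_E ?ltn_code_arg2 //.
  have IH s2 := IHg Hwf Hpreds _ _ _ _ (NEWSIG_bound _ _ _ _ _) (leqnn 1)
    (codes_newSigma z s s2 HS Hsim) codes_newsim s2.
  split => [/ALL_SIT_P H s2 Hr | H]; last apply/ALL_SIT_P => s2.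
    by have := H s2; rewrite IMP_E RZ_E Hr => /IH.
  by rewrite IMP_E RZ_E; apply/implyP => /H /IH.
- rewrite SAT_STEP_Kt !unpair1_cpair !unpair2_cpair.
  split => [/ALL_SIT_P H s1 s2 H1 H2 H3 H4 | H].
    have /ALL_SIT_P := H s1 => /(_ s2).
    by rewrite !IMP_E -!HS -!Hsim H1 H2 H3 H4 /= EQ_E !TVAL_sit_code e_eq => /eqP.
  apply/ALL_SIT_P => s1; apply/ALL_SIT_P => s2.
  rewrite !IMP_E -!HS -!Hsim EQ_E !TVAL_sit_code e_eq.
  by do 4 (apply/implyP => ?); apply/eqP; apply: H.
- rewrite SAT_STEP_K !unpair1_cpair !unpair2_cpair SAT_HIST_E ?ltn_code_arg2 //.
  have IH s' := IHg Hwf Hpreds _ _ _ _ HSb Hfl HS Hsim s'.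
  split => [/ALL_SIT_P H s' H1 H2 | H]; last apply/ALL_SIT_P => s'.
    by have := H s'; rewrite !IMP_E -HS -Hsim H1 H2 => /IH.
  by rewrite !IMP_E -HS -Hsim; apply/implyP => H1; apply/implyP => /(H _ H1) /IH.
Qed.
End SatTable.

(* [simpl] would unfold each nested bounded search of [DECIDE] into a
   disjunction of copies of its body. *)
Arguments bexn : simpl never.  Arguments primrec : simpl never.
Arguments bminn : simpl never.

Definition npreds_bound n code := (cpair code (SEQ_BOUND nat_ops n code)).+1.
Definition sim_bound (p : mcode nat) :=
  SEQ_BOUND nat_ops 1 (cpair (cpair (mc_size p) (mc_size p)) (cpair (mc_size p) (mc_size p))).

Definition code_bounded n code (p : mcode nat) Sig0 :=
  [/\ mc_size p <= n, mc_cons p <= SEQ_BOUND nat_ops n n, mc_rel p <= sig_bound p,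
      mc_npreds p = npreds_bound n code & mc_preds p <= SEQ_BOUND nat_ops 1 (mc_npreds p)]
  /\ [/\ mc_simx p <= sim_bound p, mc_simy p <= sim_bound p & Sig0 <= sig_bound p].

Definition code_accepts n k pR code p Sig0 :=
  [/\ 0 < mc_size p, CONS_OK nat_ops n p != 0, SERIAL nat_ops p != 0,
      SIM_OK nat_ops p Sig0 != 0 & KSIGHT nat_ops k p Sig0 != 0]
  /\ EX_SIT nat_ops p (fun s => oand nat_ops (MEM nat_ops p Sig0 s)
                                  (sat_at n k pR p code (cpair Sig0 (cpair 0 s)))) != 0.

Lemma DECIDE_P n k pR code :
  DECIDE nat_ops n k pR code != 0 <->
  exists p Sig0, code_bounded n code p Sig0 /\ code_accepts n k pR code p Sig0.
Proof.
rewrite /DECIDE /=; split.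
  move=> /BEX_P [d Hd /AND_P [d_pos /BEX_P [ICL HICL /BEX_P [RL HRL /BEX_P [ML HML
    /BEX_P [SX HSX /BEX_P [SY HSY /AND_P [HC /AND_P [HS /BEX_P [Sig0 HSig0
    /AND_P [HSO /AND_P [HK HX]]]]]]]]]]]].
  exists (MCode d ICL RL ML (npreds_bound n code) SX SY), Sig0.
  by split; split; rewrite // -?LT_E.
move=> [[d ICL RL ML NM SX SY] [Sig0 [[[/= Hd HICL HRL -> HML] [HSX HSY HSig0]]
  [[d_pos HC HS HSO HK] HX]]]].
apply/BEX_P; exists d => //; apply/AND_P; split; first by rewrite LT_E.
apply/BEX_P; exists ICL => //; apply/BEX_P; exists RL => //; apply/BEX_P; exists ML => //.
apply/BEX_P; exists SX => //; apply/BEX_P; exists SY => //.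
apply/AND_P; split => //; apply/AND_P; split => //; apply/BEX_P; exists Sig0 => //.
by apply/AND_P; split => //; apply/AND_P.
Qed.

(** * Completeness: satisfiable formulas are accepted *)

Definition classicb (P : Prop) : bool := if excluded_middle_informative P then true else false.

Lemma classicbP (P : Prop) : reflect P (classicb P).
Proof. by rewrite /classicb; case: excluded_middle_informative => H; constructor. Qed.

Lemma tabn_bool_bound L (f : nat -> bool) : tabn L f <= SEQ_BOUND nat_ops 1 L.
Proof. by apply: tabn_bound => i _; apply: leq_nat_of_bool1. Qed.

Section Completeness.
Variables (k : nat) (Pred : countType) (arity : Pred -> nat) (R : Pred) (Cons : finType).
Hypothesis arity_R : arity R = 2.
Variables (phi : form Pred Cons) (M : model Pred Cons).
Hypotheses (wf_phi : wf arity phi) (HM : is_model arity R M) (HK : ksight k R M).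
Local Notation D := (mD Pred Cons M).
Local Notation IM := (mI Pred Cons M).
Local Notation IcM := (mIc Pred Cons M).
Local Notation SigM := (mSigma Pred Cons M).
Local Notation simM := (msim Pred Cons M).
Local Notation n := #|Cons|.
Local Notation code := (encf phi).
Variable s0 : D * D.
Hypotheses (s0_in : s0 \in SigM) (s0_sat : sat k R IM IcM SigM simM phi s0).

Definition dom_code (x : D) := index x (enum D).
Definition dom_decode (a : nat) := nth s0.1 (enum D) a.
Definition sit_decode q := (dom_decode (unpair1 q), dom_decode (unpair2 q)).

Lemma dom_code_lt x : dom_code x < #|D|.
Proof. by rewrite /dom_code cardE index_mem mem_enum. Qed.

Lemma dom_codeK : cancel dom_code dom_decode.
Proof. by move=> x; rewrite /dom_decode /dom_code nth_index // mem_enum. Qed.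

Lemma dom_code_onto a : a < #|D| -> exists x, dom_code x = a.
Proof.
by move=> H; exists (dom_decode a); rewrite /dom_code /dom_decode index_uniq -?cardE ?enum_uniq.
Qed.

Lemma sit_codeK s : sit_decode (sit_code dom_code s) = s.
Proof.
by case: s => a b; rewrite /sit_decode /sit_code /= unpair1_cpair unpair2_cpair !dom_codeK.
Qed.

Lemma IcM_onto x : exists c, IcM c = x.
Proof. by case: HM => [_ [_ [_ [H _]]]]. Qed.

Lemma card_dom_le : #|D| <= n.
Proof.
have E : [set: D] = IcM @: [set: Cons].
  by apply/setP => x; rewrite inE; have [c <-] := IcM_onto x; apply/esym/imsetP; exists c.
by rewrite -cardsT E (leq_trans (leq_imset_card _ _)) // cardsT.
Qed.

Definition preds_tab := tabn (npreds_bound n code) (fun idx => classicb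
  (exists P l, [/\ occ P phi, size l = arity P,
                   idx = cpair (pickle P) (enc_seq (rev (map dom_code l))) & IM P l])).
Definition cons_tab := tabn n (fun j => dom_code (nth s0.1 (map IcM (enum Cons)) j)).
Definition rel_tab :=
  tabn (cpair #|D| #|D|)
    (fun idx => Rrel R IM (dom_decode (unpair1 idx)) (dom_decode (unpair2 idx))).
Definition sim_tab z := tabn (cpair (cpair #|D| #|D|) (cpair #|D| #|D|))
  (fun idx => simM z (sit_decode (unpair1 idx)) (sit_decode (unpair2 idx))).
Definition sig_tab := tabn (cpair #|D| #|D|) (fun idx => sit_decode idx \in SigM).
Definition model_code :=
  MCode #|D| cons_tab rel_tab preds_tab (npreds_bound n code) (sim_tab vx) (sim_tab vy).

Lemma cons_tab_coded c : lookupn (mc_cons model_code) n (enum_rank c) = dom_code (IcM c).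
Proof.
rewrite /= /cons_tab lookupn_tabn ?ltn_ord // (nth_map c) ?nth_enum_rank //.
by rewrite -cardE ltn_ord.
Qed.

Lemma rel_tab_coded a b :
  (lookupn (mc_rel model_code) (cpair #|D| #|D|) (cpair (dom_code a) (dom_code b)) != 0) =
  Rrel R IM a b.
Proof.
rewrite /= /rel_tab lookupn_tabn ?nat_of_bool_neq0 ?unpair1_cpair ?unpair2_cpair ?dom_codeK //.
exact: (sit_code_lt (p := model_code) dom_code_lt (a, b)).
Qed.

Lemma sig_tab_coded : codes_set model_code dom_code sig_tab SigM.
Proof.
by move=> s; rewrite (MEM_tabn (p := model_code) dom_code_lt) nat_of_bool_neq0 sit_codeK.
Qed.

Lemma sim_tab_coded : codes_sim model_code dom_code 0 simM.
Proof.
move=> z s s'; rewrite /SIM /=.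
have Hlt : cpair (sit_code dom_code s) (sit_code dom_code s') <
           cpair (cpair #|D| #|D|) (cpair #|D| #|D|).
  rewrite (leq_trans (ltn_cpair2l _ (sit_code_lt (p := model_code) dom_code_lt _))) //.
  by rewrite leq_cpair // ltnW // (sit_code_lt (p := model_code) dom_code_lt).
by case: z; rewrite /SITS2 /SITS /= /sim_tab lookupn_tabn // nat_of_bool_neq0
  unpair1_cpair unpair2_cpair !sit_codeK.
Qed.

Lemma preds_tab_coded : codes_preds arity R IM model_code dom_code phi.
Proof.
move=> P l Ho Hs _; rewrite /= /preds_tab lookupn_tabn; last first.
  rewrite ltnS leq_cpair ?occ_pickle // enc_seq_bound // ?size_rev ?size_map ?Hs ?occ_arity //.
  by rewrite all_rev all_map; apply/allP => x _ /=; rewrite (leq_trans (ltnW (dom_code_lt x)))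
    ?card_dom_le.
rewrite nat_of_bool_neq0; apply/idP/classicbP => [HI | [P' [l' [_ _ E HI]]]].
  by exists P, l.
move: E => /cpair_inj [/(pcan_inj pickleK) -> /enc_seq_inj /(inv_inj revK)].
by move=> /(inj_map (can_inj dom_codeK)) ->.
Qed.

Lemma model_code_bounded : code_bounded n code model_code sig_tab.
Proof.
split; split; rewrite /= ?tabn_bool_bound ?card_dom_le //.
by apply: tabn_bound => i _; rewrite (leq_trans (ltnW (dom_code_lt _))) ?card_dom_le.
Qed.

Lemma model_code_accepts : code_accepts n k (pickle R) code model_code sig_tab.
Proof.
have e_inj := can_inj dom_codeK.
have e_lt : forall x, dom_code x < mc_size model_code := dom_code_lt.
have e_onto : forall a, a < mc_size model_code -> exists x, dom_code x = a := dom_code_onto.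
have sim_equiv := SIM_EQUIV_P e_lt e_onto sig_tab_coded sim_tab_coded.
have ksight_at := KSIGHT_AT_P k e_inj e_lt e_onto rel_tab_coded sig_tab_coded
  sim_tab_coded.
case: HM => [_ [_ [Hser [_ [_ Hequiv]]]]].
split; first split.
- by apply/card_gt0P; exists s0.1.
- by apply/(CONS_OK_P e_inj e_lt e_onto cons_tab_coded); apply: IcM_onto.
- exact/(SERIAL_P e_lt e_onto rel_tab_coded).
- rewrite /SIM_OK AND_E; apply/andP; split; [apply/(sim_equiv vx) | apply/(sim_equiv vy)];
    by [case: (Hequiv vx) => ? [? ?] | case: (Hequiv vy) => ? [? ?]].
- rewrite /KSIGHT AND_E; apply/andP; split; rewrite AND_E; apply/andP; split;
    [apply/(ksight_at vx vx) | apply/(ksight_at vx vy) | apply/(ksight_at vy vx)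
    | apply/(ksight_at vy vy)]; move=> s s'; exact: HK.
apply/(EX_SIT_P e_lt e_onto); exists s0; rewrite AND_E -sig_tab_coded s0_in /=.
apply/(sat_at_correct k arity_R e_inj e_lt e_onto cons_tab_coded rel_tab_coded
  wf_phi preds_tab_coded _ (leq0n 1) sig_tab_coded sim_tab_coded) => //.
exact: tabn_bool_bound.
Qed.
End Completeness.

Lemma DECIDE_complete k (Pred : countType) (arity : Pred -> nat) (R : Pred) (Cons : finType)
    (phi : form Pred Cons) :
  arity R = 2 -> wf arity phi -> satisfiable k arity R phi ->
  DECIDE nat_ops #|Cons| k (pickle R) (encf phi) != 0.
Proof.
move=> arity_R wf_phi [M [HM [HK [s0 [s0_in s0_sat]]]]]; apply/DECIDE_P.
exists (model_code arity R phi s0), (sig_tab s0).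
by split; [apply: model_code_bounded | apply: model_code_accepts].
Qed.

(** * Soundness: accepted formulas are satisfiable *)

Lemma CONS_OK_lt n p j :
  CONS_OK nat_ops n p != 0 -> j < n -> lookupn (mc_cons p) n j < mc_size p.
Proof. by rewrite /CONS_OK AND_E => /andP [/BALL_P H _] /H; rewrite LT_E. Qed.

Section Soundness.
Variables (k : nat) (Pred : countType) (arity : Pred -> nat) (R : Pred) (Cons : finType).
Hypothesis arity_R : arity R = 2.
Variables (phi : form Pred Cons) (p : mcode nat) (Sig0 : nat).
Hypotheses (wf_phi : wf arity phi) (Sig0_bounded : Sig0 <= sig_bound p).
Hypothesis accepts : code_accepts #|Cons| k (pickle R) (encf phi) p Sig0.
Local Notation n := #|Cons|.
Local Notation D := 'I_(mc_size p).

Lemma cons_lt (c : Cons) : lookupn (mc_cons p) n (enum_rank c) < mc_size p.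
Proof. by case: accepts => [[_ /CONS_OK_lt H _ _ _] _]; apply/H/ltn_ord. Qed.

Definition dec_I (P : Pred) : pred (seq D) := fun l =>
  (size l == arity P) && (if pickle P == pickle R
    then lookupn (mc_rel p) (cpair (mc_size p) (mc_size p))
           (cpair (nth 0 (map val l) 0) (nth 0 (map val l) 1)) != 0
    else lookupn (mc_preds p) (mc_npreds p) (cpair (pickle P) (enc_seq (rev (map val l)))) != 0).
Definition dec_Ic (c : Cons) : D := Ordinal (cons_lt c).
Definition dec_Sigma : {set D * D} := [set s | MEM nat_ops p Sig0 (sit_code val s) != 0].
Definition dec_sim (z : Var) : rel (D * D) :=
  fun s s' => SIM nat_ops p 0 (var_code z) (sit_code val s) (sit_code val s') != 0.
Definition dec_model := Model Pred Cons D dec_I dec_Ic dec_Sigma dec_sim.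

Lemma val_lt (x : D) : val x < mc_size p.
Proof. exact: ltn_ord. Qed.

Lemma val_onto a : a < mc_size p -> exists x : D, val x = a.
Proof. by move=> H; exists (Ordinal H). Qed.

Lemma dec_Ic_coded c : lookupn (mc_cons p) n (enum_rank c) = val (dec_Ic c).
Proof. by []. Qed.

Lemma dec_I_rel_coded a b :
  (lookupn (mc_rel p) (cpair (mc_size p) (mc_size p)) (cpair (val a) (val b)) != 0) =
  Rrel R dec_I a b.
Proof. by rewrite /Rrel /dec_I /= arity_R !eqxx. Qed.

Lemma dec_I_preds_coded : codes_preds arity R dec_I p val phi.
Proof. by move=> P l _ Hs HR; rewrite /dec_I Hs eqxx (negbTE HR). Qed.

Lemma dec_Sigma_coded : codes_set p val Sig0 dec_Sigma.
Proof. by move=> s; rewrite inE. Qed.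

Lemma dec_sim_coded : codes_sim p val 0 dec_sim.
Proof. by []. Qed.

Lemma dec_model_ok : is_model arity R dec_model /\ ksight k R dec_model.
Proof.
have sim_equiv := SIM_EQUIV_P val_lt val_onto dec_Sigma_coded dec_sim_coded.
have ksight_at := KSIGHT_AT_P k val_inj val_lt val_onto dec_I_rel_coded dec_Sigma_coded
  dec_sim_coded.
case: accepts => [[d_pos HC HS HSO HK] /(EX_SIT_P val_lt val_onto) [s]].
move=> /AND_P [s_in _].
split; last first.
  move: HK => /AND_P [/AND_P [/(ksight_at vx vx) H00 /(ksight_at vx vy) H01]
                       /AND_P [/(ksight_at vy vx) H10 /(ksight_at vy vy) H11]].
  by case; case.
split; first by exists (Ordinal d_pos).
split; first by move=> P l /andP [/eqP].
split; first exact/(SERIAL_P val_lt val_onto dec_I_rel_coded).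
split; first exact/(CONS_OK_P val_inj val_lt val_onto dec_Ic_coded).
split; first by exists s; rewrite dec_Sigma_coded.
move: HSO => /AND_P [/(sim_equiv vx) Hx /(sim_equiv vy) Hy].
by case => /=; [case: Hx | case: Hy].
Qed.

Lemma dec_model_sat : satisfiable k arity R phi.
Proof.
case: accepts => [_ /(EX_SIT_P val_lt val_onto) [s]]; move=> /AND_P [s_in s_sat].
exists dec_model; split; first exact: (proj1 dec_model_ok).
split; first exact: (proj2 dec_model_ok).
exists s; split; first by rewrite /= dec_Sigma_coded.
apply/(sat_at_correct k arity_R val_inj val_lt val_onto dec_Ic_coded dec_I_rel_coded wf_phi
  dec_I_preds_coded Sig0_bounded (leq0n 1) dec_Sigma_coded dec_sim_coded).
exact: s_sat.
Qed.
End Soundness.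

Lemma DECIDE_sound k (Pred : countType) (arity : Pred -> nat) (R : Pred) (Cons : finType)
    (phi : form Pred Cons) :
  arity R = 2 -> wf arity phi -> DECIDE nat_ops #|Cons| k (pickle R) (encf phi) != 0 ->
  satisfiable k arity R phi.
Proof.
move=> arity_R wf_phi /DECIDE_P [p [Sig0 [[_ [_ _ Sig0_bounded]] accepts]]].
exact: (dec_model_sat arity_R wf_phi Sig0_bounded accepts).
Qed.

Theorem corollary2 (k : nat) (Pred : countType) (arity : Pred -> nat) (R : Pred)
  (Cons : finType) :
  arity R = 2 -> 0 < #|Cons| ->
  exists c : mu, forall phi : form Pred Cons,
    inL phi -> wf arity phi ->
    (satisfiable k arity R phi -> eval c [:: encf phi] 1) /\
    (~ satisfiable k arity R phi -> eval c [:: encf phi] 0).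
Proof.
move=> arity_R _.
set prog := DECIDE hexp_ops #|Cons| k (pickle R) (hlevel 0) 1.
exists (pcompile 1 (hcompile prog)) => phi _ wf_phi.
have := eval_hcompile prog [:: encf phi]; rewrite heval_DECIDE.
have : DECIDE nat_ops #|Cons| k (pickle R) (encf phi) <= 1 by apply: leq_nat_of_bool1.
have sound := @DECIDE_sound k _ _ _ _ phi arity_R wf_phi.
have complete := @DECIDE_complete k _ _ _ _ phi arity_R wf_phi.
case: (DECIDE _ _ _ _ _) sound complete => [|[|//]] sound complete _ Heval.
  by split => // /complete.
by split => // Hunsat; case: Hunsat; apply: sound.
Qed.
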